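(* Let $\mathcal{M}$ be a complete Riemannian submanifold of $\mathbb{R}^n$ with the induced Riemannian metric, $f:\mathbb{R}^n\to\mathbb{R}$ proper lower semicontinuous, $\tilde f$ a smoothing function of $f$, and $R$ a retraction on $\mathcal{M}$. Assume that for every $\bar\mu>0$ and every $\bar x\in\mathcal{M}$ the level set $\{x\in\mathcal{M}:\tilde f(x,\bar\mu)\le\tilde f(\bar x,\bar\mu)\}$ is compact. Let $\{x_\ell\}$ be an infinite sequence generated by the Riemannian smoothing steepest descent method (RSSD) described below with $\delta_{opt}=\mu_{opt}=0$, and let $K=\{\ell:\|\eta_\ell\|\le\delta_\ell\}$. Then $K$ is an infinite set and \[ \lim_{\ell\to\infty,\ \ell\in K}\delta_\ell=0,\qquad \lim_{\ell\to\infty,\ \ell\in K}\mu_\ell=0 . \]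
   Context: Smoothing function: $\tilde f:\mathbb{R}^n\times\mathbb{R}_+\to\mathbb{R}$ with $\tilde f(\cdot,\mu)$ continuously differentiable for each $\mu>0$, $\lim_{z\to x,\mu\downarrow0}\tilde f(z,\mu)=f(x)$, and $|\tilde f(x,\mu)-f(x)|\le\kappa\omega(\mu)$ for some $\kappa>0$, $\omega:(0,\infty)\to(0,\infty)$ with $\omega(\mu)\to0$. Retraction: smooth $R:T\mathcal{M}\to\mathcal{M}$ with $R_x(0_x)=x$ and $dR_x(0_x)=\mathrm{id}_{T_x\mathcal{M}}$, $R_x$ being the restriction to the tangent space $T_x\mathcal{M}$. $\operatorname{grad}\tilde f(x,\mu)=\operatorname{Proj}_{T_x\mathcal{M}}\nabla_x\tilde f(x,\mu)$. RSSD: inputs $x_0\in\mathcal{M}$, $\delta_{opt}\ge0$, $\delta_0>0$, $\mu_{opt}\ge0$, $\mu_0>0$, $\beta\in(0,1)$, $\bar\alpha>0$, $\theta_\delta\in(0,1)$, $\theta_\mu\in(0,1)$, $\sigma\in(0,1)$. For $\ell=0,1,2,\dots$: compute $\eta_\ell=-\operatorname{grad}\tilde f(x_\ell,\mu_\ell)$. If $\|\eta_\ell\|\le\delta_{opt}$ and $\mu_\ell\le\mu_{opt}$, stop. Else if $\|\eta_\ell\|\le\delta_\ell$, set $\mu_{\ell+1}=\theta_\mu\mu_\ell$, $\delta_{\ell+1}=\theta_\delta\delta_\ell$, $x_{\ell+1}=x_\ell$. Otherwise set $\mu_{\ell+1}=\mu_\ell$, $\delta_{\ell+1}=\delta_\ell$,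 let $t_\ell=\beta^m\bar\alpha$ where $m$ is the smallest nonnegative integer with $\tilde f(R_{x_\ell}(\beta^m\bar\alpha\eta_\ell),\mu_\ell)\le\tilde f(x_\ell,\mu_\ell)-\sigma\beta^m\bar\alpha\|\operatorname{grad}\tilde f(x_\ell,\mu_\ell)\|^2$, and set $x_{\ell+1}=R_{x_\ell}(t_\ell\eta_\ell)$. *)

From HB Require Import structures.
From mathcomp Require Import all_boot all_order all_algebra.
From mathcomp Require Import all_classical all_reals all_analysis.
Set Implicit Arguments. Unset Strict Implicit. Unset Printing Implicit Defensive.
Import Order.TTheory GRing.Theory Num.Theory.
Import numFieldNormedType.Exports.
Local Open Scope classical_set_scope.
Local Open Scope ring_scope.

Section Defs.
Variable R : realType.

Fixpoint Ck {U W : normedModType R} (k : nat) (A : set U) (f : U -> W) : Prop :=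
  match k with
  | 0%N => {in A, continuous f}
  | k'.+1 => (forall x v, A x -> derivable f x v) /\
             (forall v, Ck k' A (fun x => derive f x v))
  end.

Definition smooth_on {U W : normedModType R} (A : set U) (f : U -> W) :=
  forall k, Ck k A f.

Variable n : nat.
Local Notation V := 'rV[R]_n.

Definition dotv (u v : V) : R := \sum_(i < n) u ord0 i * v ord0 i.
Definition enorm (v : V) : R := Num.sqrt (dotv v v).

Definition embedded_submanifold (M : set V) : Prop :=
  exists d : nat, (d <= n)%N /\
    forall x, M x -> exists (U : set V) (F : V -> 'rV[R]_(n - d)),
      [/\ open U, U x, smooth_on U F,
          (forall y, U y -> M y -> forall w, exists v, derive F y v = w) &
          (forall y, U y -> (M y <-> F y = 0))].

Definition tangent (M : set V) (x : V) : set V :=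
  [set v | exists (g : R -> V) (e : R), [/\ 0 < e,
      (forall t, `|t| < e -> M (g t)), g 0 = x,
      derivable g 0 1 & derive g 0 1 = v]].

Definition tangent_bundle (M : set V) : set (V * V) :=
  [set p | M p.1 /\ tangent M p.1 p.2].

Definition orth_proj (S : set V) (g : V) : V :=
  xget 0 [set p | S p /\ forall w, S w -> dotv (g - p) w = 0].

Definition egrad (h : V -> R) (x : V) : V :=
  \row_(i < n) derive h x (delta_mx ord0 i : V).

Definition rgrad (M : set V) (ft : V -> R -> R) (x : V) (mu : R) : V :=
  orth_proj (tangent M x) (egrad (fun z => ft z mu) x).

Definition curve_length (g : R -> V) : \bar R :=
  ereal_sup [set l | exists (k : nat) (t : nat -> R),
     [/\ t 0%N = 0, t k = 1, (forall i, (i < k)%N -> t i <= t i.+1) &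
         l = (\sum_(i < k) enorm (g (t i.+1) - g (t i)))%:E]].

Definition mdist (M : set V) (x y : V) : \bar R :=
  ereal_inf [set L | exists g : R -> V,
     [/\ continuous g, (forall t, 0 <= t <= 1 -> M (g t)), g 0 = x, g 1 = y &
         L = curve_length g]].

Definition complete_manifold (M : set V) : Prop :=
  forall u : nat -> V, (forall k, M (u k)) ->
    (forall e : R, 0 < e -> exists N, forall p q, (N <= p)%N -> (N <= q)%N ->
        (mdist M (u p) (u q) < e%:E)%E) ->
    exists y, M y /\ forall e : R, 0 < e -> exists N, forall p, (N <= p)%N ->
        (mdist M (u p) y < e%:E)%E.

Definition lsc_fun (f : V -> R) : Prop :=
  forall x (e : R), 0 < e -> \forall y \near x, f x - e < f y.

Definition smoothing_function (f : V -> R) (ft : V -> R -> R) : Prop :=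
  (forall mu, 0 < mu -> Ck 1 setT (fun z => ft z mu)) /\
  (forall x, (fun p : V * R => ft p.1 p.2) @ filter_prod (nbhs x) (0^'+) --> f x) /\
  exists (kappa : R) (omega : R -> R),
    [/\ 0 < kappa, (forall mu, 0 < mu -> 0 < omega mu),
        omega x @[x --> 0^'+] --> 0 &
        forall x mu, 0 < mu -> `|ft x mu - f x| <= kappa * omega mu].

Definition retraction (M : set V) (Rt : V -> V -> V) : Prop :=
  [/\ (forall x v, tangent_bundle M (x, v) -> M (Rt x v)),
      (forall p, tangent_bundle M p -> exists (W : set (V * V)) (G : V * V -> V),
          [/\ open W, W p, smooth_on W G &
              forall q, W q -> tangent_bundle M q -> G q = Rt q.1 q.2]),
      (forall x, M x -> Rt x 0 = x) &
      (forall x v, M x -> tangent M x v ->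
          derivable (fun t : R => Rt x (t *: v)) 0 1 /\
          derive (fun t : R => Rt x (t *: v)) 0 1 = v)].

Definition RSSD (M : set V) (ft : V -> R -> R) (Rt : V -> V -> V)
  (x0 : V) (delta_opt delta0 mu_opt mu0 beta abar th_delta th_mu sigma : R)
  (x : nat -> V) (mu delta : nat -> R) : Prop :=
  [/\ x 0%N = x0, mu 0%N = mu0, delta 0%N = delta0 &
   forall l : nat,
    let eta := - rgrad M ft (x l) (mu l) in
    ~ (enorm eta <= delta_opt /\ mu l <= mu_opt) /\
    (if (enorm eta <= delta l) then
       [/\ mu l.+1 = th_mu * mu l, delta l.+1 = th_delta * delta l & x l.+1 = x l]
     else
       [/\ mu l.+1 = mu l, delta l.+1 = delta l &
         exists m : nat,
           let armijo k := ft (Rt (x l) ((beta ^+ k * abar) *: eta)) (mu l) <=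
                ft (x l) (mu l) - sigma * (beta ^+ k * abar) *
                  enorm (rgrad M ft (x l) (mu l)) ^+ 2 in
           [/\ armijo m, (forall k, (k < m)%N -> ~ armijo k) &
               x l.+1 = Rt (x l) ((beta ^+ m * abar) *: eta)]])].

End Defs.

Set Warnings "-notation-overridden,-ambiguous-paths,-notation-incompatible-prefix".
From HB Require Import structures.
From mathcomp Require Import all_boot all_order all_algebra.
From mathcomp Require Import all_classical all_reals all_analysis.
From mathcomp Require Import ring lra.
Set Implicit Arguments. Unset Strict Implicit. Unset Printing Implicit Defensive.
Import Order.TTheory GRing.Theory Num.Theory.
Import numFieldNormedType.Exports.
Local Open Scope classical_set_scope.
Local Open Scope ring_scope.

(* If only finitely many iterations reduce mu and delta, then from some index N
   on they are frozen at mu_N > 0 and delta_N, and every iteration is an Armijo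
   backtracking step for the C^1 function F = ft(., mu_N) whose projected gradient
   has norm > delta_N.  The iterates stay in a compact sublevel set of F, so they
   cluster at some point xs, and F(x_l) decreases to a value >= F(xs); hence the
   accepted steps tend to 0.  Near xs, however, a first-order expansion of F o G,
   with G a smooth extension of the retraction around (xs, 0), is uniform in the base point,
   so every step below a fixed threshold passes the Armijo test and backtracking
   would have stopped earlier.  Hence K is infinite, and mu and delta, multiplied
   by theta < 1 infinitely often and constant otherwise, tend to 0. *)

Section MeanValue.
Variable R : realType.

Lemma MVT_linear_approx (phi : R -> R) (a b L e : R) :
  (forall t, Num.min a b <= t <= Num.max a b ->
     derivable phi t 1 /\ `|derive phi t 1 - L| <= e) ->
  `|phi b - phi a - L * (b - a)| <= e * `|b - a|.
Proof.
wlog ab : a b / a <= b => [hwlog H|].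
  have [ab|/ltW ba] := leP a b; first exact: hwlog.
  have -> : phi b - phi a - L * (b - a) = - (phi a - phi b - L * (a - b)) by ring.
  rewrite normrN [`|b - a|]distrC.
  by apply: hwlog => // t; rewrite minC maxC; exact: H.
rewrite (min_idPl ab) (max_idPr ab) => H.
have phi_cont : {within `[a, b], continuous phi}.
  apply: derivable_within_continuous => t; rewrite in_itv /= => tab.
  by have [] := H t tab.
have phi_derive t : t \in `]a, b[ -> is_derive t 1 phi (derive phi t 1).
  rewrite in_itv /= => /andP[a_t t_b]; apply: derivableP.
  by apply: (proj1 (H t _)); rewrite (ltW a_t) (ltW t_b).
have [c /[!in_itv] /= /andP[ac cb] ->] := MVT_segment ab phi_derive phi_cont.
rewrite -mulrBl normrM ler_wpM2r //.
by apply: (proj2 (H c _)); rewrite ac cb.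
Qed.

End MeanValue.

Section IncrementAlongDirections.
Variables (R : realType) (X : normedModType R).

Lemma derive_along_line (f : X -> R) (y b : X) (t : R) :
  derivable f (y + t *: b) b ->
  derivable (fun u : R => f (y + u *: b)) t 1 /\
  derive (fun u : R => f (y + u *: b)) t 1 = derive f (y + t *: b) b.
Proof.
rewrite /derivable /derive.
have -> : (fun h : R => h^-1 *: (((fun u => f (y + u *: b)) \o shift t) (h *: 1)
              - f (y + t *: b))) =
          (fun h : R => h^-1 *: ((f \o shift (y + t *: b)) (h *: b) - f (y + t *: b))).
  apply/funext => h /=; congr (_ *: (f _ - _)).
  by rewrite [_%:A]mulr1 scalerDl addrCA addrA.
by [].
Qed.

Lemma near_ball_sub (p : X) (P : X -> Prop) :
  (\forall y \near p, P y) -> exists2 r : R, 0 < r & forall y, `|y - p| < r -> P y.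
Proof.
move=> /nbhs_normP [r r0 Pr]; exists r => // y yp; apply: Pr.
by rewrite /ball_ /= distrC.
Qed.

(* One mean value estimate per direction, chained along the telescoping sum. *)
Lemma increment_along_directions (f : X -> R) (p : X) (I : Type) (b : I -> X)
    (D : I -> R) (r e : R) :
  (forall j, `|b j| <= 1) ->
  (forall j y, `|y - p| < r -> derivable f y (b j) /\ `|derive f y (b j) - D j| <= e) ->
  forall (js : seq I) (q : X) (c : I -> R), `|q - p| + \sum_(j <- js) `|c j| < r ->
  `|f (q + \sum_(j <- js) c j *: b j) - f q - \sum_(j <- js) c j * D j|
    <= e * \sum_(j <- js) `|c j|.
Proof.
move=> b_le1 fD js; elim: js => [|j js IH] q c.
  by rewrite !big_nil !addr0 subr0 subrr normr0 mulr0.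
rewrite !big_cons => qr.
have sum_ge0 : 0 <= \sum_(i <- js) `|c i| by rewrite sumr_ge0.
have near_q u : `|u| <= `|c j| -> `|q + u *: b j - p| <= `|q - p| + `|c j|.
  move=> uc; rewrite addrAC; apply: (le_trans (ler_normD _ _)); rewrite lerD2l normrZ.
  by apply: le_trans uc; rewrite -[leRHS]mulr1 ler_wpM2l.
have first_step : `|f (q + c j *: b j) - f q - D j * c j| <= e * `|c j|.
  have := @MVT_linear_approx _ (fun u => f (q + u *: b j)) 0 (c j) (D j) e.
  rewrite /= scale0r addr0 !subr0; apply => u u_in.
  have uc : `|u| <= `|c j|.
    move: u_in; have [c0|c0] := leP 0 (c j) => /andP[u1 u2].
      by rewrite !ger0_norm // (le_trans u1 u2).
    by rewrite ler0_norm // ltr0_norm // lerN2.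
  have up : `|q + u *: b j - p| < r.
    by apply: le_lt_trans (near_q u uc) _; apply: le_lt_trans qr; rewrite addrA lerDl.
  have [dv ->] := derive_along_line (proj1 (fD j _ up)).
  by split => //; exact: (proj2 (fD j _ up)).
have rest : `|f (q + c j *: b j + \sum_(i <- js) c i *: b i) - f (q + c j *: b j)
               - \sum_(i <- js) c i * D i| <= e * \sum_(i <- js) `|c i|.
  apply: IH; apply: le_lt_trans qr.
  by rewrite addrA lerD2r; exact: near_q.
rewrite addrA.
have -> : f (q + c j *: b j + \sum_(i <- js) c i *: b i) - f q
            - (c j * D j + \sum_(i <- js) c i * D i)
          = (f (q + c j *: b j + \sum_(i <- js) c i *: b i) - f (q + c j *: b j)
              - \sum_(i <- js) c i * D i)
            + (f (q + c j *: b j) - f q - D j * c j) by ring.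
by rewrite mulrDr addrC; apply: le_trans (ler_normD _ _) _; exact: lerD.
Qed.

End IncrementAlongDirections.

Section RowVectors.
Variable R : realType.

Lemma mx_norm_entry_le (m k : nat) (A : 'M[R]_(m, k)) i j : `|A i j| <= `|A|.
Proof.
rewrite [leRHS]/Num.Def.normr /= mx_normrE.
by apply: le_trans; last exact: (le_bigmax _ _ (i, j)).
Qed.

Lemma rV_norm_le (k : nat) (v : 'rV[R]_k) (c : R) :
  0 <= c -> (forall j, `|v 0 j| <= c) -> `|v| <= c.
Proof.
move=> c0 vc; rewrite /Num.Def.normr /= mx_normrE (bigmax_le _ c0) //= => -[i j] _.
by rewrite (ord1 i).
Qed.

Lemma norm_delta_le1 (k : nat) (j : 'I_k) : `|('e_j : 'rV[R]_k)| <= 1.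
Proof.
by apply: rV_norm_le => // i; rewrite mxE; case: (_ && _); rewrite ?normr1 ?normr0.
Qed.

Lemma ler_norm_sum_mul (m : nat) (a b : 'I_m -> R) (A B : R) :
  (forall j, `|a j| <= A) -> (forall j, `|b j| <= B) ->
  `|\sum_j a j * b j| <= m%:R * (A * B).
Proof.
move=> aA bB; apply: (le_trans (ler_norm_sum _ _ _)).
apply: (le_trans (y := \sum_(j < m) A * B)); last by rewrite sumr_const card_ord mulr_natl.
by apply: ler_sum => j _; rewrite normrM ler_pM.
Qed.

Lemma ler_norm_mulmx (m k : nat) (u : 'rV[R]_m) (A : 'M[R]_(m, k)) :
  `|u *m A| <= m%:R * (`|u| * `|A|).
Proof.
apply: rV_norm_le => [|i]; first by rewrite !mulr_ge0.
by rewrite mxE; apply: ler_norm_sum_mul => j; exact: mx_norm_entry_le.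
Qed.

Lemma sum_norm_entries_le (k : nat) (v : 'rV[R]_k) : \sum_j `|v 0 j| <= k%:R * `|v|.
Proof.
apply: (le_trans (y := \sum_(j < k) `|v|)); last by rewrite sumr_const card_ord mulr_natl.
by apply: ler_sum => j _; exact: mx_norm_entry_le.
Qed.

Lemma sum_pair0 (U W : lmodType R) (k : nat) (c : 'I_k -> R) (w : 'I_k -> W) :
  \sum_(j < k) c j *: ((0 : U), w j) = (0, \sum_(j < k) c j *: w j).
Proof.
elim/big_rec2: _ => [//|j x y _ ->].
by apply: injective_projections => /=; rewrite ?scaler0 ?addr0.
Qed.

Variable n : nat.
Local Notation V := 'rV[R]_n.

Lemma dotvC (u w : V) : dotv u w = dotv w u.
Proof. by apply: eq_bigr => i _; rewrite mulrC. Qed.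

Lemma dotvDl (u v w : V) : dotv (u + v) w = dotv u w + dotv v w.
Proof. by rewrite /dotv -big_split; apply: eq_bigr => i _; rewrite mxE mulrDl. Qed.

Lemma dotvNl (u w : V) : dotv (- u) w = - dotv u w.
Proof. by rewrite /dotv -sumrN; apply: eq_bigr => i _; rewrite mxE mulNr. Qed.

Lemma dotvBl (u v w : V) : dotv (u - v) w = dotv u w - dotv v w.
Proof. by rewrite dotvDl dotvNl. Qed.

Lemma dotvZl (a : R) (u w : V) : dotv (a *: u) w = a * dotv u w.
Proof. by rewrite /dotv mulr_sumr; apply: eq_bigr => i _; rewrite mxE mulrA. Qed.

Lemma dotv_ge0 (u : V) : 0 <= dotv u u.
Proof. by apply: sumr_ge0 => i _; rewrite -expr2 sqr_ge0. Qed.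

Lemma enorm_sqr (u : V) : enorm u ^+ 2 = dotv u u.
Proof. by rewrite /enorm sqr_sqrtr // dotv_ge0. Qed.

Lemma enorm0 : enorm (0 : V) = 0.
Proof. by rewrite /enorm /dotv big1 ?sqrtr0 // => i _; rewrite mxE mul0r. Qed.

Lemma enormN (u : V) : enorm (- u) = enorm u.
Proof. by rewrite /enorm dotvNl dotvC dotvNl opprK. Qed.

Lemma ler_norm_dotv (u w : V) : `|dotv u w| <= n%:R * (`|u| * `|w|).
Proof. by apply: ler_norm_sum_mul => i; exact: mx_norm_entry_le. Qed.

Lemma mx_norm_le_enorm (u : V) : `|u| <= enorm u.
Proof.
apply: rV_norm_le => [|j]; first exact: sqrtr_ge0.
rewrite -sqrtr_sqr ler_wsqrtr // /dotv (bigD1 j) //= -expr2 lerDl.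
by apply: sumr_ge0 => i _; rewrite -expr2 sqr_ge0.
Qed.

Lemma enorm_le_mx_norm (u : V) :
  enorm u <= Num.sqrt n%:R * `|u|.
Proof.
rewrite -[`|u|]ger0_norm // -sqrtr_sqr -sqrtrM // ler_wsqrtr //.
by apply: le_trans (ler_norm _) _; rewrite expr2; exact: ler_norm_dotv.
Qed.

Lemma orth_enorm_le (u w : V) : dotv (u - w) w = 0 -> enorm w <= enorm u.
Proof.
move=> orth; rewrite ler_wsqrtr //.
have uw : dotv u w = dotv w w by apply/eqP; rewrite -subr_eq0 -dotvBl orth.
have := dotv_ge0 (u - w).
by rewrite dotvBl [dotv u _]dotvC [dotv w _]dotvC !dotvBl [dotv w u]dotvC uw subrr subr0 subr_ge0.
Qed.

End RowVectors.

Section DirectionalJacobian.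
Variables (R : realType) (X : normedModType R) (k m : nat).

Definition dir_jacobian (G : X -> 'rV[R]_k) (p : X) (b : 'I_m -> X) : 'M[R]_(m, k) :=
  \matrix_(j, i) derive G p (b j) 0 i.

Lemma dir_jacobian_strict_approx (G : X -> 'rV[R]_k) (p : X) (b : 'I_m -> X) (r0 e : R) :
  0 < r0 -> 0 < e -> (forall j, `|b j| <= 1) ->
  (forall j y, `|y - p| < r0 -> derivable G y (b j)) ->
  (forall j, {for p, continuous (fun y => derive G y (b j))}) ->
  exists2 r : R, 0 < r & forall (q : X) (c : 'rV[R]_m), `|q - p| + \sum_j `|c 0 j| < r ->
    `|G (q + \sum_j c 0 j *: b j) - G q - c *m dir_jacobian G p b|
      <= e * \sum_j `|c 0 j|.
Proof.
move=> r00 e0 b_le1 G_der G_cont.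
have : \forall y \near p, forall j, `|derive G y (b j) - derive G p (b j)| <= e.
  apply: filter_forall => j.
  by apply: filterS ((cvgrPdist_le _ _).1 (G_cont j) _ e0) => y; rewrite distrC.
move=> /near_ball_sub [r1 r10 near_p].
exists (Num.min r0 r1) => [|q c qc]; first by rewrite lt_min r00.
apply: rV_norm_le => [|i]; first by rewrite mulr_ge0 ?sumr_ge0 // ltW.
have entry_der j y : `|y - p| < Num.min r0 r1 -> derivable (fun y => G y 0 i) y (b j) /\
    `|derive (fun y => G y 0 i) y (b j) - dir_jacobian G p b j i| <= e.
  rewrite lt_min => /andP[y0 y1]; have Gy := G_der j y y0.
  split; first exact: (derivable_mxP _ _ _).1 Gy 0 i.
  have -> : derive (fun y => G y 0 i) y (b j) = derive G y (b j) 0 i.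
    by rewrite (derive_mx Gy) mxE.
  apply: le_trans (near_p y y1 j).
  by have := mx_norm_entry_le (derive G y (b j) - derive G p (b j)) 0 i; rewrite !mxE.
by rewrite !mxE; exact: increment_along_directions b_le1 entry_der (index_enum 'I_m) q _ qc.
Qed.

End DirectionalJacobian.

Section SndPartial.
Variables (R : realType) (n k : nat).
Local Notation V := 'rV[R]_n.

Definition snd_basis : 'I_n -> V * V := fun j => (0, 'e_j).

Lemma snd_partial_strict_approx (G : V * V -> 'rV[R]_k) (x0 : V) (r0 e : R) :
  0 < r0 -> 0 < e -> (forall y v, `|y - (x0, 0)| < r0 -> derivable G y v) ->
  (forall v, {for (x0, 0), continuous (fun y => derive G y v)}) ->
  exists2 r : R, 0 < r & forall x v : V, `|x - x0| < r -> `|v| < r ->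
    `|G (x, v) - G (x, 0) - v *m dir_jacobian G (x0, 0) snd_basis| <= e * `|v|.
Proof.
move=> r00 e0 G_der G_cont.
have n1 : 0 < n%:R + 1 :> R by rewrite ltr_pwDr.
set e' := e / (n%:R + 1); have e'0 : 0 < e' by rewrite divr_gt0.
have b_le1 j : `|snd_basis j| <= 1 by rewrite prod_normE ge_max normr0 ler01 norm_delta_le1.
have [r2 r20 approx] := dir_jacobian_strict_approx r00 e'0 b_le1
  (fun j y => G_der y (snd_basis j)) (fun j => G_cont (snd_basis j)).
exists (r2 / (n%:R + 1)) => [|x v xr vr]; first by rewrite divr_gt0.
have sum_v := sum_norm_entries_le v.
have pq : `|((x, 0) - (x0, 0) : V * V)| + \sum_j `|v 0 j| < r2.
  have -> : `|((x, 0) - (x0, 0) : V * V)| = `|x - x0|.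
    by rewrite prod_normE /= subrr normr0; apply/max_idPl.
  have : r2 / (n%:R + 1) * (n%:R + 1) = r2 by rewrite divfK ?gt_eqF.
  have : n%:R * `|v| <= n%:R * (r2 / (n%:R + 1)) by rewrite ler_wpM2l // ltW.
  by lra.
have := approx _ _ pq.
have -> : (x, 0) + \sum_j v 0 j *: snd_basis j = (x, v) :> V * V.
  rewrite sum_pair0 -row_sum_delta.
  by apply: injective_projections => /=; rewrite ?addr0 ?add0r.
move=> /le_trans; apply.
have -> : e = e' * (n%:R + 1) by rewrite divfK ?gt_eqF.
rewrite -mulrA ler_pM2l //; apply: le_trans sum_v _.
by rewrite mulrDl mul1r lerDl.
Qed.

End SndPartial.
Arguments snd_basis {R n}.

Section C1Functions.
Variables (R : realType) (n : nat).
Local Notation V := 'rV[R]_n.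
Variable F : V -> R.
Hypothesis F_derivable : forall z v, derivable F z v.
Hypothesis F_derive_cont : forall v, continuous (fun z => derive F z v).

Lemma dotv_egrad (h a : V) : \sum_(j < n) h 0 j * derive F a 'e_j = dotv h (egrad F a).
Proof. by apply: eq_bigr => j _; rewrite mxE. Qed.

Lemma egrad_strict_approx (a0 : V) (e : R) : 0 < e ->
  exists2 r : R, 0 < r & forall a h : V, `|a - a0| < r -> `|h| < r ->
    `|F (a + h) - F a - dotv h (egrad F a0)| <= e * `|h|.
Proof.
move=> e0; have n1 : 0 < n%:R + 1 :> R by rewrite ltr_pwDr.
set e' := e / (n%:R + 1); have e'0 : 0 < e' by rewrite divr_gt0.
have : \forall y \near a0, forall j : 'I_n, `|derive F y 'e_j - derive F a0 'e_j| <= e'.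
  apply: (@filter_forall _ _
    (fun j y => `|derive F y 'e_j - derive F a0 'e_j| <= e') (nbhs a0) _) => j.
  have : \forall y \near a0, `|derive F a0 'e_j - derive F y 'e_j| <= e'.
    by move/cvgrPdist_le: (@F_derive_cont 'e_j a0); apply.
  by apply: filterS => y; rewrite distrC.
move=> /near_ball_sub [r0 r00 near_a0].
exists (r0 / (n%:R + 1)) => [|a h a_a0 hr]; first by rewrite divr_gt0.
have sum_h := sum_norm_entries_le h.
have ah : `|a - a0| + \sum_(j < n) `|h 0 j| < r0.
  have : r0 / (n%:R + 1) * (n%:R + 1) = r0 by rewrite divfK ?gt_eqF.
  have : n%:R * `|h| <= n%:R * (r0 / (n%:R + 1)) by rewrite ler_wpM2l // ltW.
  by lra.
have := increment_along_directions (@norm_delta_le1 R n)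
  (fun j y ya0 => conj (@F_derivable y 'e_j) (near_a0 y ya0 j)) ah.
rewrite -row_sum_delta dotv_egrad => approx; apply: le_trans approx _.
have -> : e = e' * (n%:R + 1) by rewrite divfK ?gt_eqF.
rewrite -mulrA ler_pM2l //; apply: le_trans sum_h _.
by rewrite mulrDl mul1r lerDl.
Qed.

Lemma C1_continuous : continuous F.
Proof.
move=> a0; have [r r0 approx] := egrad_strict_approx a0 ltr01.
set C := 1 + n%:R * `|egrad F a0|.
have C0 : 0 < C by rewrite ltr_pwDl ?mulr_ge0.
apply/(@cvgrPdist_lt _ _ _ (nbhs a0)) => e e0; apply: (proj2 (@nbhs_normP _ V a0 _)).
have rC : 0 < Num.min r (e / C) by rewrite lt_min r0 divr_gt0.
exists (Num.min r (e / C)) => // y /=.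
rewrite /ball_ /= distrC lt_min => /andP[yr ye].
have := approx a0 (y - a0); rewrite subrr normr0 [a0 + _]addrC subrK => /(_ r0 yr) approx_y.
have := ler_norm_dotv (y - a0) (egrad F a0).
have : `|y - a0| * C < e by rewrite -ltr_pdivlMr.
rewrite [`|F a0 - _|]distrC; set d := dotv _ _ => yC dot_le.
have := ler_normD (F y - F a0 - d) d; rewrite subrK.
by rewrite /C in yC; lra.
Qed.

Lemma egrad_perturbed_approx (a0 : V) (W e : R) : 0 <= W -> 0 < e ->
  exists2 d : R, 0 < d & forall (a b w : V) (s : R),
    `|a - a0| < d -> `|b - a| < d -> `|w| <= W -> 0 < s -> `|b - a - s *: w| <= d * s ->
    `|F b - F a - s * dotv w (egrad F a0)| <= e * s.
Proof.
move=> W0 e0; set g0 := egrad F a0.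
have W1 : 0 < W + 1 by rewrite ltr_pwDr.
have K0 : 0 < n%:R * `|g0| + 1 by rewrite ltr_pwDr ?mulr_ge0.
set e1 := e / 2 / (W + 1); have e10 : 0 < e1 by rewrite !divr_gt0.
have [r r0 approx] := egrad_strict_approx a0 e10.
set d := Num.min r (Num.min 1 (e / 2 / (n%:R * `|g0| + 1))).
have d0 : 0 < d by rewrite !lt_min r0 ltr01 !divr_gt0.
have [dr d1 dK] : [/\ d <= r, d <= 1 & d * (n%:R * `|g0| + 1) <= e / 2].
  by rewrite -ler_pdivlMr // !ge_min !lexx !orbT.
exists d => // a b w s ad bad wW s0 err.
have := approx a (b - a) (lt_le_trans ad dr) (lt_le_trans bad dr).
rewrite [a + _]addrC subrK => Fab.
have -> : F b - F a - s * dotv w g0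
    = (F b - F a - dotv (b - a) g0) + dotv (b - a - s *: w) g0.
  by rewrite !dotvBl dotvZl; ring.
apply: le_trans (ler_normD _ _) _.
have h_le : `|b - a| <= s * (W + 1).
  have := ler_normD (b - a - s *: w) (s *: w); rewrite subrK normrZ gtr0_norm //.
  have : d * s <= s by rewrite ler_piMl // ltW.
  have : s * `|w| <= s * W by rewrite ler_pM2l.
  by lra.
have T1 : e1 * `|b - a| <= e / 2 * s.
  have -> : e / 2 * s = e1 * (s * (W + 1)) by rewrite mulrCA /e1 divfK ?gt_eqF // mulrC.
  by rewrite ler_pM2l.
have T2 : `|dotv (b - a - s *: w) g0| <= e / 2 * s.
  apply: le_trans (ler_norm_dotv _ _) _.
  have : n%:R * (`|b - a - s *: w| * `|g0|) <= n%:R * (d * s * `|g0|).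
    by apply: ler_wpM2l => //; apply: ler_wpM2r.
  have : s * (d * (n%:R * `|g0|)) <= s * (d * (n%:R * `|g0| + 1)).
    by rewrite ler_pM2l // ler_pM2l // lerDl.
  have : s * (d * (n%:R * `|g0| + 1)) <= s * (e / 2) by rewrite ler_pM2l.
  by nra.
by lra.
Qed.

Lemma curve_right_approx (c : R -> V) (e : R) : derivable c 0 1 -> 0 < e ->
  \forall s \near 0^'+,
    `|F (c s) - F (c 0) - s * dotv (derive c 0 1) (egrad F (c 0))| <= e * s.
Proof.
move=> dc e0; set v := derive c 0 1; set a0 := c 0.
have [d d0 approx] := egrad_perturbed_approx a0 (normr_ge0 v) e0.
have [r r0 quot] : exists2 r : R, 0 < r &
    forall s, 0 < s < r -> `|s^-1 *: (c s - a0) - v| < d.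
  have : \forall h \near 0^', `|v - h^-1 *: ((c \o shift 0) (h *: 1) - c 0)| < d.
    by move/cvgrPdist_lt: dc; apply.
  rewrite /dnbhs /within => /near_ball_sub [r r0 near_0]; exists r => // s /andP[s0 sr].
  have := near_0 s; rewrite subr0 gtr0_norm // => /(_ sr); rewrite gt_eqF // => /(_ isT).
  by rewrite /= [s *: 1]mulr1 addr0 distrC.
have v1 : 0 < `|v| + d by rewrite ltr_wpDl.
near=> s.
have s0 : 0 < s by near: s; exact: nbhs_right_gt.
have sr : s < Num.min r (d / (`|v| + d)).
  by near: s; apply: nbhs_right_lt; rewrite lt_min r0 divr_gt0.
move: sr; rewrite lt_min ltr_pdivlMr // => /andP[sr sd].
have err : `|c s - a0 - s *: v| <= d * s.
  have -> : c s - a0 - s *: v = s *: (s^-1 *: (c s - a0) - v).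
    by rewrite scalerBr scalerA mulfV ?gt_eqF // scale1r.
  by rewrite normrZ gtr0_norm // mulrC ler_pM2r // ltW // quot // s0.
apply: approx => //; first by rewrite subrr normr0.
have := ler_normD (c s - a0 - s *: v) (s *: v); rewrite subrK normrZ gtr0_norm //.
by nra.
Unshelve. all: by end_near.
Qed.

Lemma composite_uniform_approx (G : V * V -> V) (x0 : V) (r0 B e : R) :
  0 < r0 -> 0 <= B -> 0 < e ->
  (forall y v, `|y - (x0, 0)| < r0 -> derivable G y v) ->
  (forall v, {for (x0, 0), continuous (fun y => derive G y v)}) ->
  {for (x0, 0), continuous G} ->
  exists2 r : R, 0 < r & forall (x v : V) (s : R),
    `|x - x0| < r -> `|v| <= B -> 0 < s < r ->
    `|F (G (x, s *: v)) - F (G (x, 0))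
       - s * dotv (v *m dir_jacobian G (x0, 0) snd_basis) (egrad F (G (x0, 0)))|
      <= e * s.
Proof.
move=> r00 B0 e0 G_der G_dcont G_cont.
set p : V * V := (x0, 0); set J := dir_jacobian G p snd_basis.
have W0 : 0 <= n%:R * (B * `|J|) by rewrite !mulr_ge0.
have [d d0 F_approx] := egrad_perturbed_approx (G p) W0 e0.
have B1 : 0 < B + 1 by rewrite ltr_pwDr.
have [r2 r20 G_lin] := snd_partial_strict_approx r00 (divr_gt0 d0 B1) G_der G_dcont.
have [r3 r30 G_near] : exists2 r3 : R, 0 < r3 &
    forall y, `|y - p| < r3 -> `|G y - G p| < d / 2.
  have : \forall y \near p, `|G p - G y| < d / 2.
    by move/cvgrPdist_lt: G_cont; apply; rewrite divr_gt0.
  by move=> /near_ball_sub [r3 r30 near_p]; exists r3 => // y /near_p; rewrite distrC.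
set m := Num.min r2 r3; have m0 : 0 < m by rewrite lt_min r20.
exists (m / (B + 1)) => [|x v s xr vB /andP[s0 sr]]; first by rewrite divr_gt0.
rewrite ltr_pdivlMr // in sr.
have xm : `|x - x0| < m.
  by apply: lt_le_trans xr _; rewrite ler_pdivrMr //; nra.
have sv_le : `|s *: v| <= s * B by rewrite normrZ gtr0_norm // ler_pM2l.
have sv_lt : `|s *: v| < m.
  by apply: le_lt_trans sv_le _; apply: le_lt_trans sr; rewrite ler_pM2l // lerDl.
move: xm sv_lt; rewrite !lt_min => /andP[xr2 xr3] /andP[svr2 svr3].
have near_x u : `|u| < r3 -> `|G (x, u) - G p| < d / 2.
  by move=> ur3; apply: G_near; rewrite prod_normE /= subr0 gt_max xr3.
have a_near := near_x 0 (ltac:(by rewrite normr0)).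
have b_near := near_x _ svr3.
apply: F_approx => //.
- by apply: lt_trans a_near _; lra.
- have := ler_normD (G (x, s *: v) - G p) (G p - G (x, 0)).
  by rewrite addrA subrK [`|G p - _|]distrC; lra.
- apply: le_trans (ler_norm_mulmx v J) _.
  by rewrite ler_wpM2l // ler_wpM2r.
- rewrite scalemxAl; apply: le_trans (G_lin x (s *: v) xr2 svr2) _.
  have : `|s *: v| <= s * (B + 1) by apply: le_trans sv_le _; rewrite ler_pM2l // lerDl.
  move=> /(ler_wpM2l (ltW (divr_gt0 d0 B1))) /le_trans; apply.
  by rewrite mulrCA divfK ?gt_eqF // mulrC.
Qed.

End C1Functions.

Section TangentSpace.
Variables (R : realType) (n : nat).
Local Notation V := 'rV[R]_n.
Variable M : set V.

Lemma tangent0 (x : V) : M x -> tangent M x 0.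
Proof. by move=> Mx; exists (cst x), 1; split => //; exact: derive_cst. Qed.

Lemma tangentZ (x v : V) (c : R) : tangent M x v -> tangent M x (c *: v).
Proof.
move=> [g [e [e0 g_in g0 dg1 dg1_v]]].
have dg : differentiable g 0 := (derivable1_diffP g 0).1 dg1.
have c1 : 0 < `|c| + 1 by rewrite ltr_pwDr.
have quotE : (fun h : R => h^-1 *: (((fun t => g (c * t)) \o shift 0) (h *: 1) - g (c * 0))) =
             (fun h : R => h^-1 *: ((g \o shift 0) (h *: c) - g 0)).
  apply/funext => h /=; rewrite mulr0 !addr0 [h *: 1]mulr1.
  by rewrite [h *: c]/(h * c) mulrC.
exists (fun t => g (c * t)), (e / (`|c| + 1)); split.
- by rewrite divr_gt0.
- move=> t; rewrite ltr_pdivlMr // => te; apply: g_in; rewrite normrM.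
  by apply: le_lt_trans te; rewrite mulrC ler_wpM2l // lerDl.
- by rewrite mulr0.
- by rewrite /derivable quotE; exact: diff_derivable.
- rewrite /derive quotE -/(derive g 0 c) (deriveE _ dg) -dg1_v (deriveE _ dg).
  by rewrite -[c in LHS]mulr1 -[c * 1]/(c *: (1 : R)) linearZ.
Qed.

(* [orth_proj] is defined by choice: when [g] has no orthogonal projection
   onto [S] it returns [0]. *)
Lemma orth_projP (S : set V) (g : V) :
  orth_proj S g = 0 \/
  S (orth_proj S g) /\ forall w, S w -> dotv (g - orth_proj S g) w = 0.
Proof.
rewrite /orth_proj.
case: (pselect (exists p, S p /\ forall w, S w -> dotv (g - p) w = 0)).
  by move=> /(xgetPex 0) pg; right.
by move=> no_p; left; apply: xgetPN => p pg; apply: no_p; exists p.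
Qed.

Lemma tangent_orth_proj (x g : V) : M x -> tangent M x (orth_proj (tangent M x) g).
Proof. by move=> Mx; case: (orth_projP (tangent M x) g) => [->|[]//]; exact: tangent0. Qed.

End TangentSpace.

Section ProjectedGradient.
Variables (R : realType) (n : nat).
Local Notation V := 'rV[R]_n.
Variables (M : set V) (F : V -> R).
Hypothesis F_derive_cont : forall v, continuous (fun z => derive F z v).

Let pgrad (y : V) := orth_proj (tangent M y) (egrad F y).

Lemma pgrad_egrad_dot (y : V) : pgrad y != 0 ->
  dotv (egrad F y) (pgrad y) = enorm (pgrad y) ^+ 2.
Proof.
move=> g0; rewrite enorm_sqr; apply/eqP; rewrite -subr_eq0 -dotvBl.
case: (orth_projP (tangent M y) (egrad F y)) => [g_0|[gT orth]].
  by rewrite /pgrad g_0 eqxx in g0.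
by rewrite orth.
Qed.

Lemma pgrad_bounded_near (a0 : V) : exists2 r : R, 0 < r &
  forall y, `|y - a0| < r -> `|pgrad y| <= Num.sqrt n%:R * (`|egrad F a0| + 1).
Proof.
have : \forall y \near a0, forall j : 'I_n, `|derive F y 'e_j - derive F a0 'e_j| <= 1.
  apply: (@filter_forall _ _
    (fun j y => `|derive F y 'e_j - derive F a0 'e_j| <= 1) (nbhs a0) _) => j.
  have : \forall y \near a0, `|derive F a0 'e_j - derive F y 'e_j| <= 1.
    by move/cvgrPdist_le: (@F_derive_cont 'e_j a0); apply.
  by apply: filterS => y; rewrite distrC.
move=> /near_ball_sub [r r0 near_a0]; exists r => // y ya0.
have grad_le : `|egrad F y| <= `|egrad F a0| + 1.
  have : `|egrad F y - egrad F a0| <= 1.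
    by apply: rV_norm_le => // j; rewrite !mxE; exact: near_a0.
  have := ler_normD (egrad F y - egrad F a0) (egrad F a0); rewrite subrK.
  by lra.
rewrite /pgrad; case: (orth_projP (tangent M y) (egrad F y)) => [->|[gT orth]].
  by rewrite normr0 mulr_ge0 // addr_ge0.
apply: le_trans (mx_norm_le_enorm _) _.
apply: le_trans (orth_enorm_le (orth _ gT)) _.
apply: le_trans (enorm_le_mx_norm _) _.
by rewrite ler_wpM2l.
Qed.

End ProjectedGradient.

Definition armijo (R : realType) (n : nat) (F : 'rV[R]_n -> R)
    (Rt : 'rV[R]_n -> 'rV[R]_n -> 'rV[R]_n) (sigma : R) (y g : 'rV[R]_n) (t : R) : Prop :=
  F (Rt y (t *: - g)) <= F y - sigma * t * enorm g ^+ 2.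

(* The slope [A] of the uniform approximation is unknown, but the two estimates at
   the auxiliary step [s'] force [A <= - D + 2 ef]. *)
Lemma armijo_of_slope_approx (R : realType) (Fy FRs FRs' s s' A D ef sigma : R) :
  0 < s -> 0 < s' -> 3 * ef < (1 - sigma) * D ->
  `|FRs' - Fy + s' * D| <= ef * s' -> `|FRs' - Fy - s' * A| <= ef * s' ->
  `|FRs - Fy - s * A| <= ef * s -> FRs <= Fy - sigma * s * D.
Proof.
move=> s0 s'0 efD; rewrite !ler_norml => /andP[_ exact'] /andP[approx' _] /andP[_ approx].
have A_le : A + D - 2 * ef <= 0.
  have : s' * (A + D - 2 * ef) <= 0 by nra.
  by rewrite pmulr_rle0.
by nra.
Qed.

Section RetractionExtension.
Variables (R : realType) (n : nat).
Local Notation V := 'rV[R]_n.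
Variables (M : set V) (Rt : V -> V -> V).
Hypothesis Rt_retraction : retraction M Rt.

Lemma retraction_local_extension (xs : V) : M xs ->
  exists (G : V * V -> V) (rW : R), [/\ 0 < rW,
    forall q v, `|q - (xs, 0)| < rW -> derivable G q v,
    forall v, {for (xs, 0), continuous (fun q => derive G q v)},
    {for (xs, 0), continuous G} &
    forall y v, M y -> tangent M y v -> `|(y, v) - (xs, 0)| < rW -> G (y, v) = Rt y v].
Proof.
move=> Mxs; have [_ Rt_ext _ _] := Rt_retraction.
have [W [G [W_open W_xs G_smooth G_Rt]]] := Rt_ext (xs, 0) (conj Mxs (tangent0 Mxs)).
have [rW rW0 rW_W] : exists2 rW : R, 0 < rW & forall q, `|q - (xs, 0)| < rW -> W q.
  by apply: near_ball_sub; apply: open_nbhs_nbhs.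
have xs_W : (xs, 0) \in W by rewrite inE.
have [[G_der G_dcont] G_cont] := (G_smooth 1%N, G_smooth 0%N).
exists G, rW; split => // [q v /rW_W /G_der //|v||y v My vT /rW_W yv_W].
- exact: G_dcont.
- exact: G_cont.
- by rewrite G_Rt.
Qed.

End RetractionExtension.

Section ArmijoNear.
Variables (R : realType) (n : nat).
Local Notation V := 'rV[R]_n.
Variables (M : set V) (Rt : V -> V -> V) (F : V -> R) (sigma : R).
Hypothesis Rt_retraction : retraction M Rt.
Hypothesis F_derivable : forall z v, derivable F z v.
Hypothesis F_derive_cont : forall v, continuous (fun z => derive F z v).

Let pgrad (y : V) := orth_proj (tangent M y) (egrad F y).

Lemma armijo_uniform_near (xs : V) (dl : R) : M xs -> 0 < dl -> sigma < 1 ->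
  exists2 r : R, 0 < r & forall (y : V) (s : R), M y -> `|y - xs| < r ->
    dl < enorm (pgrad y) -> 0 < s < r -> armijo F Rt sigma y (pgrad y) s.
Proof.
move=> Mxs dl0 sigma1.
have [_ _ Rt0 Rt_d] := Rt_retraction.
have [G [rW [rW0 G_der G_dcont G_cont G_Rt]]] := retraction_local_extension Rt_retraction Mxs.
set B := Num.sqrt n%:R * (`|egrad F xs| + 1).
have B0 : 0 <= B by rewrite mulr_ge0 // addr_ge0.
have B1 : 0 < B + 1 by rewrite ltr_pwDr.
have [rg rg0 pgrad_le] := pgrad_bounded_near M F_derive_cont xs.
set ef := (1 - sigma) * dl ^+ 2 / 3.
have ef0 : 0 < ef by rewrite divr_gt0 // mulr_gt0 ?subr_gt0 // exprn_gt0.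
have [rF rF0 FG_approx] :=
  composite_uniform_approx F_derivable F_derive_cont rW0 B0 ef0 G_der G_dcont G_cont.
set r := Num.min (Num.min rF rg) (Num.min rW (rW / (B + 1))).
have r0 : 0 < r by rewrite !lt_min rF0 rg0 rW0 divr_gt0.
exists r => // y s My yr dl_g /andP[s0 sr].
move: yr; rewrite !lt_min => /andP[/andP[yF yg] /andP[yW _]].
move: dl_g; set g := pgrad y => dl_g.
have v_le : `|- g| <= B by rewrite normrN; exact: pgrad_le.
have vT t : tangent M y (t *: - g).
  by rewrite -scaleN1r scalerA; apply: tangentZ; exact: tangent_orth_proj.
have G_Rt_near t : 0 <= t < r -> G (y, t *: - g) = Rt y (t *: - g).
  move=> /andP[t0 tr]; apply: G_Rt => //.
  rewrite prod_normE /= subr0 gt_max yW normrZ ger0_norm //=.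
  move: tr; rewrite !lt_min ltr_pdivlMr // => /andP[_ /andP[_ tB]].
  by apply: le_lt_trans tB; rewrite ler_wpM2l // ler_wpDr.
have Gy0 : G (y, 0) = y by rewrite -(scale0r (- g)) G_Rt_near ?lexx ?r0 // scale0r Rt0.
have g_ne0 : g != 0.
  by apply: contraTneq dl_g => g0; rewrite g0 enorm0 -leNgt ltW.
have gT : tangent M y (- g) by rewrite -[- g]scale1r; exact: vT.
have [dc dc_val] := Rt_d y (- g) My gT.
have [s' [[s'0 s'r] exact_s']] := filter_ex (filterI
  (filterI (nbhs_right_gt 0) (nbhs_right_lt r0))
  (curve_right_approx F_derivable F_derive_cont dc ef0)).
rewrite /= scale0r Rt0 // dc_val dotvNl dotvC pgrad_egrad_dot // mulrN opprK in exact_s'.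
have s_lt t : 0 < t < r -> 0 < t < rF.
  by move=> /andP[-> tr]; move: tr; rewrite !lt_min => /andP[/andP[]].
have approx_at t : 0 < t < r ->
    `|F (Rt y (t *: - g)) - F y - t * dotv (- g *m dir_jacobian G (xs, 0) snd_basis)
                                      (egrad F (G (xs, 0)))| <= ef * t.
  move=> /[dup] t_in /andP[t0 tr].
  have := FG_approx y (- g) t yF v_le (s_lt _ t_in).
  by rewrite Gy0 G_Rt_near // (ltW t0) tr.
apply: (armijo_of_slope_approx s0 s'0 _ exact_s' (approx_at _ _) (approx_at _ _)).
- rewrite /ef mulrCA divff ?mulr1; last by rewrite pnatr_eq0.
  by rewrite ltr_pM2l ?subr_gt0 //; nra.
- by rewrite s'0 s'r.
- by rewrite s0 sr.
Qed.
End ArmijoNear.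

Lemma finite_nat_bounded (K : set nat) :
  finite_set K -> exists N, forall l, (N <= l)%N -> ~ K l.
Proof.
move=> Kfin; exists (\max_(i <- finmap.enum_fset (fset_set K)) i).+1 => l Nl Kl.
have : l \in finmap.enum_fset (fset_set K) by rewrite (in_fset_set Kfin) inE.
move=> /(@leq_bigmax_seq _ _ xpredT id l) /(_ isT) /(leq_trans Nl).
by rewrite ltnn.
Qed.

Lemma infinite_nat_unbounded (K : set nat) :
  infinite_set K -> forall N, exists2 l, (N <= l)%N & K l.
Proof.
move=> Kinf N; apply: contrapT => bounded; apply: Kinf.
apply: (sub_finite_set (B := `I_N)); last exact: finite_II.
by move=> l Kl; rewrite /= ltnNge; apply/negP => Nl; apply: bounded; exists l.
Qed.

Lemma cvg0_contract_infinitely_often (R : realType) (d : nat -> R) (K : set nat) (th : R) :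
  0 < th < 1 -> (forall l, 0 < d l) ->
  (forall l, K l -> d l.+1 = th * d l) -> (forall l, ~ K l -> d l.+1 = d l) ->
  infinite_set K -> d @ \oo --> 0.
Proof.
move=> /andP[th0 th1] d_gt0 dK dnK Kinf.
have d_nonincr N l : (N <= l)%N -> d l <= d N.
  move=> /subnK <-; elim: (l - N)%N => [|k IH]; first by rewrite add0n.
  rewrite addSn; apply: le_trans IH; case: (pselect (K (k + N)%N)) => Kk.
    by rewrite dK // ler_piMl // ltW.
  by rewrite dnK.
have d_geometric k : exists N, d N <= th ^+ k * d 0%N.
  elim: k => [|k [N dN]]; first by exists 0%N; rewrite expr0 mul1r.
  have [l Nl Kl] := infinite_nat_unbounded Kinf N.
  exists l.+1; rewrite dK // exprS -mulrA ler_pM2l //.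
  exact: le_trans (d_nonincr _ _ Nl) dN.
apply/cvgrPdist_lt => e e0.
have : \forall k \near \oo, `|0 - geometric (d 0%N) th k| < e.
  by move/cvgrPdist_lt: (@cvg_geometric R (d 0%N) th (ltac:(by rewrite gtr0_norm))); apply.
move=> [k0 _ /(_ k0 (leqnn k0))]; rewrite /= sub0r normrN gtr0_norm ?mulr_gt0 ?exprn_gt0 //.
move=> geom_lt; have [N dN] := d_geometric k0.
exists N => // l /= Nl; rewrite sub0r normrN gtr0_norm //.
by apply: le_lt_trans (d_nonincr _ _ Nl) _; apply: le_lt_trans dN _; rewrite mulrC.
Qed.

Lemma compact_seq_cluster (R : realType) (X : normedModType R) (L : set X) (u : nat -> X) :
  compact L -> (forall l, L (u l)) ->
  exists2 xs, L xs & forall r : R, 0 < r -> forall N, exists2 l, (N <= l)%N & `|u l - xs| < r.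
Proof.
move=> L_compact uL.
have uL_oo : (u @ \oo) L by exists 0%N => // l _; exact: uL.
have [xs [Lxs xs_cluster]] := L_compact _ _ uL_oo.
exists xs => // r r0 N.
have tail : (u @ \oo) (u @` [set l | (N <= l)%N]) by exists N => // l /= Nl; exists l.
have ball_xs : nbhs xs [set y | `|y - xs| < r].
  by rewrite -nbhs_nbhs_norm; exists r => // y /=; rewrite distrC.
by have [_ [[l /= Nl <-] ul]] := xs_cluster _ _ tail ball_xs; exists l.
Qed.

Section ArmijoDescent.
Variables (R : realType) (n : nat).
Local Notation V := 'rV[R]_n.
Variables (M : set V) (Rt : V -> V -> V) (F : V -> R) (beta abar sigma : R).
Variables (x : nat -> V) (m : nat -> nat).
Hypothesis Rt_retraction : retraction M Rt.
Hypothesis F_derivable : forall z v, derivable F z v.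
Hypothesis F_derive_cont : forall v, continuous (fun z => derive F z v).
Hypotheses (beta_gt0 : 0 < beta) (abar_gt0 : 0 < abar).
Hypotheses (sigma_gt0 : 0 < sigma) (sigma_lt1 : sigma < 1).
Hypothesis x0_in : M (x 0%N).
Hypothesis level_compact : compact [set z | M z /\ F z <= F (x 0%N)].

Let pgrad (y : V) := orth_proj (tangent M y) (egrad F y).
Let step (l : nat) := beta ^+ m l * abar.

Hypothesis x_next : forall l, x l.+1 = Rt (x l) (step l *: - pgrad (x l)).
Hypothesis armijo_step : forall l, armijo F Rt sigma (x l) (pgrad (x l)) (step l).
Hypothesis armijo_first : forall l k, (k < m l)%N ->
  ~ armijo F Rt sigma (x l) (pgrad (x l)) (beta ^+ k * abar).

Lemma descent_in_M l : M (x l).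
Proof.
have [Rt_in _ _ _] := Rt_retraction.
elim: l => // l IH; rewrite x_next; apply: Rt_in; split => //=.
by rewrite -scaleN1r scalerA; apply: tangentZ; exact: tangent_orth_proj.
Qed.

Lemma step_gt0 l : 0 < step l.
Proof. by rewrite mulr_gt0 // exprn_gt0. Qed.

Lemma descent_decrease l :
  F (x l.+1) <= F (x l) - sigma * step l * enorm (pgrad (x l)) ^+ 2.
Proof. by rewrite x_next; exact: armijo_step. Qed.

Lemma descent_nonincreasing l k : (l <= k)%N -> F (x k) <= F (x l).
Proof.
move=> /subnK <-; elim: (k - l)%N => [|j IH]; first by rewrite add0n.
rewrite addSn; apply: le_trans (descent_decrease _) _; apply: le_trans IH.
rewrite lerBlDr lerDl; apply: mulr_ge0; last exact: sqr_ge0.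
by apply: mulr_ge0; apply: ltW; [exact: sigma_gt0 | exact: step_gt0].
Qed.

Lemma descent_cluster : exists2 xs, M xs &
  (forall l, F xs <= F (x l)) /\
  forall r : R, 0 < r -> forall N, exists2 l, (N <= l)%N & `|x l - xs| < r.
Proof.
have level l : M (x l) /\ F (x l) <= F (x 0%N).
  by split; [exact: descent_in_M | exact: descent_nonincreasing].
have [xs [Mxs _] xs_cluster] := compact_seq_cluster level_compact level.
exists xs => //; split => // l; rewrite leNgt; apply/negP => Fl_lt.
have F_cont := C1_continuous F_derivable F_derive_cont (x := xs).
have : \forall y \near xs, `|F xs - F y| < F xs - F (x l).
  by move/cvgrPdist_lt: F_cont; apply; rewrite subr_gt0.
move=> /near_ball_sub [r r0 near_xs].
have [k lk xk] := xs_cluster r r0 l.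
have := near_xs _ xk; have := descent_nonincreasing lk.
by rewrite ltr_norml => ? /andP[_ ?]; lra.
Qed.

Lemma descent_steps_small (dl tau : R) : 0 < dl -> 0 < tau ->
  (forall l, dl < enorm (pgrad (x l))) -> exists N, forall l, (N <= l)%N -> step l < tau.
Proof.
move=> dl0 tau0 g_large.
have [xs Mxs [F_lb xs_cluster]] := descent_cluster.
have c0 : 0 < sigma * dl ^+ 2 * tau by rewrite !mulr_gt0 // exprn_gt0.
have : \forall y \near xs, `|F xs - F y| < sigma * dl ^+ 2 * tau.
  by move/cvgrPdist_lt: (C1_continuous F_derivable F_derive_cont (x := xs)); apply.
move=> /near_ball_sub [r r0 near_xs].
have [N _ xN] := xs_cluster r r0 0%N.
exists N => l Nl.
have sq : dl ^+ 2 < enorm (pgrad (x l)) ^+ 2 by have := g_large l; rewrite !expr2; nra.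
have : sigma * step l * dl ^+ 2 < sigma * step l * enorm (pgrad (x l)) ^+ 2.
  by rewrite ltr_pM2l // mulr_gt0 // step_gt0.
have := near_xs _ xN; rewrite ltr_norml => /andP[FN _].
have := descent_decrease l; have := F_lb l.+1; have := descent_nonincreasing Nl.
move=> FlN Fxs Fdecr decr.
have : sigma * dl ^+ 2 * step l < sigma * dl ^+ 2 * tau by lra.
by rewrite ltr_pM2l // mulr_gt0 // exprn_gt0.
Qed.

Lemma descent_pgrad_small (dl : R) : 0 < dl -> exists l, enorm (pgrad (x l)) <= dl.
Proof.
move=> dl0; apply: contrapT => /forallNP g_not_small.
have g_large l : dl < enorm (pgrad (x l)) by rewrite ltNge; apply/negP; exact: g_not_small.
have [xs Mxs [_ xs_cluster]] := descent_cluster.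
have [r r0 armijo_near] :=
  armijo_uniform_near Rt_retraction F_derivable F_derive_cont Mxs dl0 sigma_lt1.
have tau0 : 0 < Num.min abar (beta * r) by rewrite lt_min abar_gt0 mulr_gt0.
have [N small] := descent_steps_small dl0 tau0 g_large.
have [l Nl xl] := xs_cluster r r0 N.
move: (small l Nl) (@armijo_first l); rewrite lt_min /step.
case: (m l) => [|k]; first by rewrite expr0 mul1r ltxx.
rewrite exprS -mulrA ltr_pM2l // => /andP[_ sr] /(_ k (ltnSn k)); apply.
apply: armijo_near; [exact: descent_in_M | exact: xl | exact: g_large |].
by rewrite sr mulr_gt0 // exprn_gt0.
Qed.

End ArmijoDescent.

Section RSSDIterates.
Variables (R : realType) (n : nat).
Local Notation V := 'rV[R]_n.
Variables (M : set V) (ft : V -> R -> R) (Rt : V -> V -> V) (x0 : V).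
Variables (delta_opt delta0 mu_opt mu0 beta abar th_delta th_mu sigma : R).
Variables (x : nat -> V) (mu delta : nat -> R).
Hypothesis rssd :
  RSSD M ft Rt x0 delta_opt delta0 mu_opt mu0 beta abar th_delta th_mu sigma x mu delta.

Let g l := rgrad M ft (x l) (mu l).
Let K := [set l : nat | enorm (- g l) <= delta l].

Lemma RSSD_reduce l :
  K l -> [/\ mu l.+1 = th_mu * mu l, delta l.+1 = th_delta * delta l & x l.+1 = x l].
Proof. by have [_ _ _ /(_ l) [_]] := rssd; rewrite /= => + Kl; rewrite Kl. Qed.

Lemma RSSD_descent l : ~ K l ->
  [/\ mu l.+1 = mu l, delta l.+1 = delta l & exists m : nat,
    [/\ armijo (ft ^~ (mu l)) Rt sigma (x l) (g l) (beta ^+ m * abar),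
        forall k, (k < m)%N -> ~ armijo (ft ^~ (mu l)) Rt sigma (x l) (g l) (beta ^+ k * abar)
      & x l.+1 = Rt (x l) ((beta ^+ m * abar) *: - g l)]].
Proof.
by have [_ _ _ /(_ l) [_]] := rssd; rewrite /= => + /negP/negbTE Kl; rewrite Kl.
Qed.

Lemma RSSD_in_M : retraction M Rt -> M x0 -> forall l, M (x l).
Proof.
move=> [Rt_in _ _ _] Mx0; elim=> [|l IH]; first by have [-> _ _ _] := rssd.
case: (pselect (K l)) => [/RSSD_reduce [_ _ ->] //|/RSSD_descent [_ _ [m [_ _ ->]]]].
apply: Rt_in; split => //=.
by rewrite -scaleN1r scalerA; apply: tangentZ; exact: tangent_orth_proj.
Qed.

Lemma RSSD_gt0 : 0 < mu0 -> 0 < delta0 -> 0 < th_mu -> 0 < th_delta ->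
  forall l, 0 < mu l /\ 0 < delta l.
Proof.
move=> mu0_gt0 delta0_gt0 th_mu0 th_delta0.
elim=> [|l [mu_gt0 delta_gt0]]; first by have [_ -> -> _] := rssd.
case: (pselect (K l)).
  by move=> /RSSD_reduce [-> -> _]; rewrite !mulr_gt0.
by move=> /RSSD_descent [-> -> _].
Qed.

Lemma RSSD_const_tail N : (forall l, (N <= l)%N -> ~ K l) ->
  forall l, (N <= l)%N -> mu l = mu N /\ delta l = delta N.
Proof.
move=> notK l /subnK <-; elim: (l - N)%N => // k [IHmu IHdelta].
have [mu_eq delta_eq _] := RSSD_descent (notK (k + N)%N (leq_addl k N)).
by rewrite addSn mu_eq delta_eq.
Qed.

Lemma RSSD_K_infinite :
  retraction M Rt -> (forall mu', 0 < mu' -> Ck 1 setT (ft ^~ mu')) ->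
  (forall mub xb, 0 < mub -> M xb -> compact [set z | M z /\ ft z mub <= ft xb mub]) ->
  M x0 -> 0 < delta0 -> 0 < mu0 -> 0 < beta -> 0 < abar ->
  0 < th_delta -> 0 < th_mu -> 0 < sigma < 1 -> infinite_set K.
Proof.
move=> retr ft_C1 level_compact Mx0 delta0_gt0 mu0_gt0 beta0 abar0 th_delta0 th_mu0.
move=> /andP[sigma0 sigma1] /finite_nat_bounded [N notK].
have [muN_gt0 deltaN_gt0] := RSSD_gt0 mu0_gt0 delta0_gt0 th_mu0 th_delta0 N.
have const l : mu (l + N)%N = mu N /\ delta (l + N)%N = delta N.
  exact: RSSD_const_tail notK _ (leq_addl l N).
have [[F_der F_dcont] Mx] := (ft_C1 _ muN_gt0, RSSD_in_M retr Mx0).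
pose pg l := rgrad M ft (x (l + N)%N) (mu N).
have /choice [m m_spec] l : exists m : nat,
    armijo (ft ^~ (mu N)) Rt sigma (x (l + N)) (pg l) (beta ^+ m * abar) /\
    (forall k, (k < m)%N ->
       ~ armijo (ft ^~ (mu N)) Rt sigma (x (l + N)) (pg l) (beta ^+ k * abar)) /\
    x (l + N).+1 = Rt (x (l + N)) ((beta ^+ m * abar) *: - pg l).
  have [_ _ [m [armijo_m armijo_lt x_next]]] := RSSD_descent (notK _ (leq_addl l N)).
  by exists m; rewrite /pg -(proj1 (const l)).
have [l small] := @descent_pgrad_small _ _ M Rt (ft ^~ (mu N)) beta abar sigma
  (fun l => x (l + N)%N) m retr (fun z v => F_der z v I) (fun v z => F_dcont v z (in_setT z))
  beta0 abar0 sigma0 sigma1 (Mx N) (level_compact _ _ muN_gt0 (Mx N))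
  (fun l => (m_spec l).2.2) (fun l => (m_spec l).1) (fun l => (m_spec l).2.1)
  _ deltaN_gt0.
apply: (notK _ (leq_addl l N)).
by rewrite /K /= enormN /g (proj1 (const l)) (proj2 (const l)).
Qed.

End RSSDIterates.

Theorem proposition4p1 (R : realType) (n : nat) (M : set 'rV[R]_n)
  (f : 'rV[R]_n -> R) (ft : 'rV[R]_n -> R -> R) (Rt : 'rV[R]_n -> 'rV[R]_n -> 'rV[R]_n)
  (x0 : 'rV[R]_n) (delta0 mu0 beta abar th_delta th_mu sigma : R)
  (x : nat -> 'rV[R]_n) (mu delta : nat -> R) :
  embedded_submanifold M -> complete_manifold M ->
  lsc_fun f -> smoothing_function f ft -> retraction M Rt ->
  (forall mub xb, 0 < mub -> M xb ->
     compact [set z | M z /\ ft z mub <= ft xb mub]) ->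
  M x0 -> 0 < delta0 -> 0 < mu0 -> 0 < beta < 1 -> 0 < abar ->
  0 < th_delta < 1 -> 0 < th_mu < 1 -> 0 < sigma < 1 ->
  RSSD M ft Rt x0 0 delta0 0 mu0 beta abar th_delta th_mu sigma x mu delta ->
  let K := [set l : nat | enorm (- rgrad M ft (x l) (mu l)) <= delta l] in
  [/\ infinite_set K,
      (forall e : R, 0 < e -> exists N : nat, forall l, (N <= l)%N -> K l -> `|delta l| < e) &
      (forall e : R, 0 < e -> exists N : nat, forall l, (N <= l)%N -> K l -> `|mu l| < e)].
Proof.
move=> _ _ _ [ft_C1 _] retr level_compact Mx0 delta0_gt0 mu0_gt0 /andP[beta0 _] abar0
  /andP[th_delta0 th_delta1] /andP[th_mu0 th_mu1] sigma01 rssd K.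
have Kinf : infinite_set K.
  exact: RSSD_K_infinite rssd retr ft_C1 level_compact Mx0 delta0_gt0 mu0_gt0 beta0 abar0
    th_delta0 th_mu0 sigma01.
have pos := RSSD_gt0 rssd mu0_gt0 delta0_gt0 th_mu0 th_delta0.
have delta_cvg : delta @ \oo --> 0.
  apply: (cvg0_contract_infinitely_often (th := th_delta)) Kinf; rewrite ?th_delta0 //.
  - by move=> l; case: (pos l).
  - by move=> l /(RSSD_reduce rssd) [].
  - by move=> l /(RSSD_descent rssd) [].
have mu_cvg : mu @ \oo --> 0.
  apply: (cvg0_contract_infinitely_often (th := th_mu)) Kinf; rewrite ?th_mu0 //.
  - by move=> l; case: (pos l).
  - by move=> l /(RSSD_reduce rssd) [].
  - by move=> l /(RSSD_descent rssd) [].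
have eventually_small (d : nat -> R) : d @ \oo --> 0 ->
    forall e, 0 < e -> exists N : nat, forall l, (N <= l)%N -> K l -> `|d l| < e.
  move=> /cvgrPdist_lt d_cvg e /d_cvg [N _ dN]; exists N => l Nl _.
  by have := dN l Nl; rewrite sub0r normrN.
by split => //; exact: eventually_small.
Qed.
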